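(* Let $0<c<1/2$, and for integers $j\ge0$ set $c_j=c+c^2+\dots+c^j$ (so $c_0=0$). Then for every $B\in\mathcal F$ and every integer $m$ with $0\le m\le k:=\mu(B)$, $$g(m,B)\le 2c_1+2c_2+\dots+2c_{m-1}+c_m+c_m\,c_{k-m},$$ where $g(m,B)=\sum_{i\in\mathrm{OPT}^m_{\mathrm{large}}(B)}\sum_{B'\in\mathrm{Chain}[M(i),B]} c^{\,1+\mathrm{brank}(i,B')}$.
   Context: Let $U$ be a finite ground set with weight function $w:U\to\mathbb{R}_{\ge0}$ taking pairwise distinct values. Let $\mathcal F$ be a laminar family of subsets of $U$ (for any $A,B\in\mathcal F$: $A\subseteq B$, $B\subseteq A$, or $A\cap B=\emptyset$) with $U\in\mathcal F$; each $A\in\mathcal F$ has a positive integer capacity $\mu(A)$, with $\mu(A)<\mu(B)$ whenever $A\subsetneq B$. A set $X\subseteq U$ is independent iff $|X\cap A|\le\mu(A)$ for all $A\in\mathcal F$. For $i\in U$, $M(i)$ denotes the minimal member of $\mathcal F$ containing $i$. For $A\subseteq B$ in $\mathcal F$, $\mathrm{Chain}[A,B]$ is the sequence of all $B'\in\mathcal F$ with $A\subseteq B'\subseteq B$, ordered by inclusion from $A$ up to $B$. For $B\in\mathcal F$, $\mathrm{OPT}(B)$ is the maximum-weight independent subset of $B$, and $\mathrm{OPT}^m_{\mathrm{large}}(B)$ is the set of the $m$ largest-weight elements of $\mathrm{OPT}(B)$ (all of $\mathrm{OPT}(B)$ if it has fewer than $m$ elements). The backward rank $\mathrm{brank}(i,B)$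 is the number of elements of $\mathrm{OPT}(B)$ of weight less than $w(i)$. Standing convention of the paper: by padding $U$ with dummy elements of infinitesimal weight, one assumes $|\mathrm{OPT}(B)|=\mu(B)$ for every $B\in\mathcal F$. *)

From HB Require Import structures.
From mathcomp Require Import all_boot all_order all_algebra.
Set Implicit Arguments. Unset Strict Implicit. Unset Printing Implicit Defensive.
Import Order.TTheory GRing.Theory Num.Theory.

Section LaminarDefs.
Variable U : finType.

Definition laminar (F : {set {set U}}) : Prop :=
  forall A B, A \in F -> B \in F ->
    [\/ A \subset B, B \subset A | [disjoint A & B]].

Definition indep (F : {set {set U}}) (mu : {set U} -> nat) (X : {set U}) : bool :=
  [forall A in F, #|X :&: A| <= mu A].

Definition Mmin (F : {set {set U}}) (i : U) : {set U} :=
  odflt setT [pick A | minset (fun X : {set U} => (X \in F) && (i \in X)) A].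

(* Chain[A,B] (as a set; only summed over) *)
Definition Chain (F : {set {set U}}) (A B : {set U}) : {set {set U}} :=
  [set B' in F | (A \subset B') && (B' \subset B)].

Variable R : realFieldType.

(* X is OPT(B): a maximum-weight independent subset of B, of size mu(B)
   (the size condition is the paper's standing padding convention). *)
Definition is_OPT (F : {set {set U}}) (mu : {set U} -> nat) (w : U -> R)
    (B X : {set U}) : Prop :=
  [/\ X \subset B, indep F mu X, #|X| = mu B &
      forall Y : {set U}, Y \subset B -> indep F mu Y ->
        (\sum_(i in Y) w i <= \sum_(i in X) w i)%R].

Definition OPT_large (w : U -> R) (OPTB : {set U}) (m : nat) : {set U} :=
  [set i in OPTB | #|[set j in OPTB | (w i < w j)%R]| < m].

Definition brank (w : U -> R) (OPTB : {set U}) (i : U) : nat :=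
  #|[set j in OPTB | (w j < w i)%R]|.

Definition csum (c : R) (j : nat) : R := (\sum_(1 <= t < j.+1) c ^+ t)%R.

Definition gfun (F : {set {set U}}) (OPT : {set U} -> {set U}) (w : U -> R)
    (c : R) (m : nat) (B : {set U}) : R :=
  (\sum_(i in OPT_large w (OPT B) m)
     \sum_(B' in Chain F (Mmin F i) B) c ^+ (1 + brank w (OPT B') i))%R.

End LaminarDefs.

From HB Require Import structures.
From mathcomp Require Import all_boot all_order all_algebra.
Import Order.TTheory GRing.Theory Num.Theory.
From mathcomp Require Import ring lra zify.

Set Implicit Arguments.
Unset Strict Implicit.
Unset Printing Implicit Defensive.

Local Open Scope ring_scope.

(* Write f(m,k) = 2c_1 + ... + 2c_{m-1} + c_m + c_m c_{k-m}; the theorem says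
   g(m,B) <= f(m, mu B).  The proof is a strong
   induction on |B|.  Let L = OPT^m_large(B).  The chain Chain[M(i),B] of an
   element i of B is B itself followed by the chain of the unique child of B
   (maximal member of F strictly below B) containing i, so g(m,B) splits into
   the terms of B and, for every child C, the chain sums of the a_C elements
   of L inside C.  The terms of B are at most c^{mu B - m} c_m because the
   elements of L have distinct ranks below m in OPT(B).  Since OPT(B) restricted
   to C is part of OPT(C) and keeps the heavier elements of OPT(C), the
   elements of L inside C are the a_C largest elements of OPT(C), so the
   induction hypothesis bounds child C by f(a_C, mu C).  The children are
   disjoint, so the a_C sum to at most m, and an arithmetic superadditivity
   property of f (proved on closed forms) absorbs their contributions. *)

Section GeometricSums.
Variables (R : realFieldType) (c : R).

Lemma csum0 : csum c 0 = 0.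
Proof. by rewrite /csum big_geq. Qed.

Lemma csumS j : csum c j.+1 = csum c j + c ^+ j.+1.
Proof. by rewrite /csum big_nat_recr. Qed.

Lemma csumSl j : csum c j.+1 = c * (1 + csum c j).
Proof.
elim: j => [|j IH]; first by rewrite csumS csum0 expr1; ring.
by rewrite [csum c j.+2]csumS {1}IH csumS exprS; ring.
Qed.

Lemma csum_closed j : (1 - c) * csum c j = c - c ^+ j.+1.
Proof.
elim: j => [|j IH]; first by rewrite csum0 expr1; ring.
by rewrite csumS mulrDr IH !exprS; ring.
Qed.

Lemma sum_pow_tail m k : (m <= k)%N ->
  \sum_(t < m) c ^+ (k - t) = c ^+ (k - m) * csum c m.
Proof.
elim: m => [|m IH] mk; first by rewrite big_ord0 csum0 mulr0.
rewrite big_ord_recr /= IH ?(ltnW mk) // csumSl.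
have -> : (k - m = (k - m.+1).+1)%N by lia.
by rewrite exprS; ring.
Qed.

Hypothesis c_ge0 : 0 <= c.

Lemma csum_ge0 j : 0 <= csum c j.
Proof. by apply: sumr_ge0 => t _; apply: exprn_ge0. Qed.

Lemma csum_mono j1 j2 : (j1 <= j2)%N -> csum c j1 <= csum c j2.
Proof.
move=> /subnKC <-; elim: (j2 - j1)%N => [|d IH]; first by rewrite addn0.
by rewrite addnS csumS (le_trans IH) // lerDl exprn_ge0.
Qed.

End GeometricSums.

(* The right-hand side of the theorem,
     f(m,k) = 2c_1 + ... + 2c_{m-1} + c_m + c_m c_{k-m},
   and the two arithmetic facts about it that drive the induction:
   f(., k) is superadditive as long as the arguments add up to at most k, and
   at "overflow" a + b = k + 1 the sum f(a,k) + f(b,k) equals the pure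
   prefix 2c_1 + ... + 2c_k.  Everything is verified on closed forms obtained
   by multiplying with (1 - c)^2 > 0. *)
Section BoundFunction.
Variables (R : realFieldType) (c : R).
Hypotheses (c_gt0 : 0 < c) (c_lt1 : c < 1).

Definition twice_csums (m : nat) : R := \sum_(1 <= j < m) 2 * csum c j.

Definition fbound (m k : nat) : R :=
  twice_csums m + csum c m + csum c m * csum c (k - m).

Let c_ge0 : 0 <= c. Proof. exact: ltW. Qed.

Let pow_le1 n : c ^+ n <= 1.
Proof. by apply: exprn_ile1 => //; exact: ltW. Qed.

Let sq_gt0 : 0 < (1 - c) ^+ 2.
Proof. by apply: exprn_gt0; rewrite subr_gt0. Qed.

Let sq_neq0 : (1 - c) ^+ 2 != 0.
Proof. exact: lt0r_neq0. Qed.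

Lemma twice_csums0 : twice_csums 0 = 0. Proof. by rewrite /twice_csums big_geq. Qed.
Lemma twice_csums1 : twice_csums 1 = 0. Proof. by rewrite /twice_csums big_geq. Qed.

Lemma twice_csumsS m : (0 < m)%N -> twice_csums m.+1 = twice_csums m + 2 * csum c m.
Proof. by move=> m_gt0; rewrite /twice_csums big_nat_recr. Qed.

Lemma twice_csums_ge0 m : 0 <= twice_csums m.
Proof. by apply: sumr_ge0 => j _; rewrite mulr_ge0 ?csum_ge0. Qed.

Lemma twice_csums_closed m :
  (1 - c) ^+ 2 * twice_csums m = 2 * (c * (1 - c) * m%:R - c + c ^+ m.+1).
Proof.
elim: m => [|m IH]; first by rewrite twice_csums0 expr1; ring.
case: m IH => [|m] IH; first by rewrite twice_csums1 expr2; ring.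
rewrite twice_csumsS // mulrDr IH.
have -> : (1 - c) ^+ 2 * (2 * csum c m.+1) = 2 * (1 - c) * ((1 - c) * csum c m.+1)
  by ring.
by rewrite csum_closed -[(m.+2)%:R]natr1 -[(m.+1)%:R]natr1 !exprS; ring.
Qed.

Lemma fbound_closed m k : (1 - c) ^+ 2 * fbound m k =
  2 * (c * (1 - c) * m%:R - c + c ^+ m.+1) + (1 - c) * (c - c ^+ m.+1)
  + (c - c ^+ m.+1) * (c - c ^+ (k - m).+1).
Proof. by rewrite -!csum_closed /fbound !mulrDr twice_csums_closed expr2; ring. Qed.

Lemma fbound0 k : fbound 0 k = 0.
Proof. by rewrite /fbound twice_csums0 csum0; ring. Qed.

Lemma fbound_ge0 m k : 0 <= fbound m k.
Proof. by rewrite /fbound !addr_ge0 ?mulr_ge0 ?twice_csums_ge0 ?csum_ge0. Qed.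

Lemma fbound_mono m k1 k2 : (k1 <= k2)%N -> fbound m k1 <= fbound m k2.
Proof.
move=> k12; rewrite /fbound lerD2l ler_wpM2l ?csum_ge0 //.
by apply: csum_mono => //; exact: leq_sub2r.
Qed.

Lemma fbound_superadd a b k : (a + b <= k)%N ->
  fbound a k + fbound b k <= fbound (a + b) k.
Proof.
move=> abk; rewrite -(ler_pM2l sq_gt0) mulrDr !fbound_closed.
rewrite -(subnKC abk); move: (k - (a + b))%N => d.
have -> : (a + b + d - a = b + d)%N by lia.
have -> : (a + b + d - b = a + d)%N by lia.
have -> : (a + b + d - (a + b) = d)%N by lia.
rewrite natrD !exprS !exprD.
have key : 0 <= c * (1 - c ^+ a) * (1 - c ^+ b) * (1 - c * c ^+ d).
  by rewrite !mulr_ge0 ?subr_ge0 // -exprS.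
move: key (pow_le1 a) (pow_le1 b) (pow_le1 d).
set x := c ^+ a; set y := c ^+ b; set z := c ^+ d => *; nra.
Qed.

Lemma fbound_overflow a b k : (a <= k)%N -> (b <= k)%N -> (a + b = k.+1)%N ->
  fbound a k + fbound b k = twice_csums k.+1.
Proof.
move=> ak bk abk; apply: (mulfI sq_neq0).
rewrite mulrDr !fbound_closed twice_csums_closed.
case: a ak abk => [|a] ak abk; first by lia.
case: b bk abk => [|b] bk abk; first by lia.
have -> : k = (a + b).+1 by lia.
have -> : ((a + b).+1 - a.+1 = b)%N by lia.
have -> : ((a + b).+1 - b.+1 = a)%N by lia.
rewrite -[(a + b).+2%:R]natr1 -[(a + b).+1%:R]natr1 -[a.+1%:R]natr1.
by rewrite -[b.+1%:R]natr1 natrD !exprS !exprD; ring.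
Qed.

(* The budget available to the children of a set of capacity k + 1 that
   jointly receive s elements: f(s,k) while s <= k, and the pure prefix
   2c_1 + ... + 2c_{s-1} at s = k + 1. *)
Variable k : nat.

Definition budget (s : nat) : R := if (s <= k)%N then fbound s k else twice_csums s.

Lemma budget0 : budget 0 = 0.
Proof. by rewrite /budget leq0n fbound0. Qed.

Lemma budget_ge0 s : 0 <= budget s.
Proof. by rewrite /budget; case: ifP => _; rewrite ?fbound_ge0 ?twice_csums_ge0. Qed.

Lemma budget_step s a : (a <= k)%N -> (s + a <= k.+1)%N ->
  budget s + fbound a k <= budget (s + a).
Proof.
case: a => [|a] ak sak; first by rewrite fbound0 addr0 addn0.
have sk : (s <= k)%N by lia.
rewrite /budget sk; case: leqP => sak'; first exact: fbound_superadd.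
have e : (s + a.+1 = k.+1)%N by lia.
by rewrite e (fbound_overflow sk ak e).
Qed.

Lemma budget_mono s t : (s <= t)%N -> (t <= k.+1)%N -> budget s <= budget t.
Proof.
move=> /subnKC <-; elim: (t - s)%N => [|d IH] h; first by rewrite addn0.
have [k0|k_gt0] := posnP k.
  have -> : s = 0%N by lia.
  by rewrite budget0 budget_ge0.
apply: (le_trans (IH _)); first by lia.
apply: (le_trans _ (_ : budget (s + d) + fbound 1 k <= _)).
  by rewrite lerDl fbound_ge0.
by rewrite addnS -[(s + d).+1]addn1; apply: budget_step; lia.
Qed.

Lemma budget_sum (I : Type) (r : seq I) (P : pred I) (a kC : I -> nat) :
  (forall i, P i -> (a i <= kC i)%N /\ (kC i <= k)%N) ->
  (\sum_(i <- r | P i) a i <= k.+1)%N ->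
  \sum_(i <- r | P i) fbound (a i) (kC i) <= budget (\sum_(i <- r | P i) a i).
Proof.
move=> hP; elim: r => [|x r IH]; first by rewrite !big_nil budget0.
rewrite !big_cons; case: ifP => Px; last exact: IH.
move=> sum_le; have [ax kx] := hP x Px.
rewrite addrC addnC (le_trans (lerD (IH _) (fbound_mono (a x) kx))) //; first by lia.
by apply: budget_step; lia.
Qed.

(* Splitting off the contribution c^{k+1-m} c_m of the top set from f(m,k+1). *)
Lemma fbound_split m : (m <= k.+1)%N ->
  c ^+ (k.+1 - m) * csum c m + budget m = fbound m k.+1.
Proof.
move=> mk; rewrite /budget; case: leqP => h; last first.
  have -> : m = k.+1 by apply/eqP; rewrite eqn_leq mk h.
  by rewrite subnn expr0 mul1r /fbound subnn csum0 mulr0 addr0 addrC.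
apply: (mulfI sq_neq0); rewrite mulrDr !fbound_closed.
rewrite -(subnKC h); move: (k - m)%N => e.
have -> : ((m + e).+1 - m = e.+1)%N by lia.
have -> : ((m + e) - m = e)%N by lia.
have -> : (1 - c) ^+ 2 * (c ^+ e.+1 * csum c m)
    = (1 - c) * c ^+ e.+1 * ((1 - c) * csum c m) by ring.
by rewrite csum_closed [c ^+ e.+2]exprS; ring.
Qed.

End BoundFunction.

Lemma sumr_le_subset (R : numDomainType) (I : finType) (P Q : pred I) (G : I -> R) :
  (forall i, P i -> Q i) -> (forall i, Q i -> 0 <= G i) ->
  \sum_(i | P i) G i <= \sum_(i | Q i) G i.
Proof.
move=> PQ G_ge0; rewrite [leLHS]big_mkcond [leRHS]big_mkcond /=.
apply: ler_sum => i _; case Pi: (P i); first by rewrite PQ.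
by case Qi: (Q i); rewrite ?G_ge0.
Qed.

Lemma sum_distinct_ranks (R : numDomainType) (U : finType) (S : {set U})
    (rho : U -> nat) (m : nat) (phi : nat -> R) :
  {in S &, injective rho} -> (forall i, i \in S -> (rho i < m)%N) ->
  (forall t, 0 <= phi t) ->
  \sum_(i in S) phi (rho i) <= \sum_(t < m) phi t.
Proof.
move=> rho_inj rho_lt phi_ge0.
pose f i : 'I_m.+1 := inord (rho i).
have fK i : i \in S -> nat_of_ord (f i) = rho i.
  by move=> iS; rewrite inordK // ltnS ltnW // rho_lt.
have f_inj : {in S &, injective f}.
  by move=> i j iS jS e; apply: rho_inj => //; rewrite -(fK i) // -(fK j) // e.
rewrite (eq_bigr (fun i => phi (f i))); last by move=> i iS; rewrite fK.
rewrite -(big_imset (fun t : 'I_m.+1 => phi t) f_inj) /=.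
rewrite (le_trans (@sumr_le_subset _ _ _ (fun t : 'I_m.+1 => (t < m)%N) _ _ _)) //.
- by move=> t /imsetP [i iS ->]; rewrite fK // rho_lt.
- rewrite big_mkcond big_ord_recr /= ltnn addr0.
  by rewrite le_eqVlt; apply/orP; left; apply/eqP; apply: eq_bigr => t _; rewrite ltn_ord.
Qed.

Lemma card_swap (U : finType) (X A : {set U}) (x y : U) : x \in X -> y \notin X ->
  (#|(y |: (X :\ x)) :&: A| + (x \in A) = #|X :&: A| + (y \in A))%N.
Proof.
move=> xX yX.
have eY : #|(y |: (X :\ x)) :&: A| = ((y \in A) + #|(X :\ x) :&: A|)%N.
  rewrite (cardsD1 y) !inE eqxx /=; congr (_ + _)%N.
  apply: eq_card => z; rewrite !inE; case: (eqVneq z y) => [->|] //=.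
  by rewrite (negbTE yX) !andbF.
have eX : #|X :&: A| = ((x \in A) + #|(X :\ x) :&: A|)%N.
  rewrite (cardsD1 x) !inE xX /=; congr (_ + _)%N.
  by apply: eq_card => z; rewrite !inE; case: (z == x); rewrite ?andbF.
by rewrite eY eX; lia.
Qed.

Section LaminarMatroid.
Variables (U : finType) (R : realFieldType) (w : U -> R).
Variables (F : {set {set U}}) (mu : {set U} -> nat) (OPT : {set U} -> {set U}).
Hypotheses (w_inj : injective w) (F_laminar : laminar F).
Hypothesis OPT_spec : forall B, B \in F -> is_OPT F mu w B (OPT B).

Lemma OPT_sub (B : {set U}) : B \in F -> OPT B \subset B.
Proof. by move=> /OPT_spec []. Qed.

Lemma OPT_indep (B : {set U}) : B \in F -> indep F mu (OPT B).
Proof. by move=> /OPT_spec []. Qed.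

Lemma OPT_card (B : {set U}) : B \in F -> #|OPT B| = mu B.
Proof. by move=> /OPT_spec []. Qed.

Lemma OPT_max (B Y : {set U}) : B \in F -> Y \subset B -> indep F mu Y ->
  \sum_(i in Y) w i <= \sum_(i in OPT B) w i.
Proof. by move=> /OPT_spec [_ _ _ Ymax] YB Yind; apply: Ymax. Qed.

Lemma indep_card (X A : {set U}) : indep F mu X -> A \in F -> (#|X :&: A| <= mu A)%N.
Proof. by move=> /forallP /(_ A) /implyP; apply. Qed.

Lemma laminar_nested (A B : {set U}) (x : U) :
  A \in F -> B \in F -> x \in A -> x \in B ->
  A \subset B \/ B \subset A.
Proof.
move=> AF BF xA xB; case: (F_laminar AF BF) => [|| AB]; [by left|by right|].
by rewrite (disjointFr AB xA) in xB.
Qed.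

Definition tight (X E : {set U}) : bool := (mu E <= #|X :&: E|)%N.

(* Exchange argument: if y in B \ OPT(B) could replace x in OPT(B) without
   overfilling any member of F (every member containing y but not x is not
   tight), then optimality of OPT(B) forces w y < w x. *)
Lemma OPT_exchange (B : {set U}) (x y : U) :
  B \in F -> x \in OPT B -> y \in B -> y \notin OPT B ->
  (forall A, A \in F -> y \in A -> x \notin A -> ~~ tight (OPT B) A) ->
  w y < w x.
Proof.
move=> BF xX yB yX slack; set X := OPT B in xX yX slack *.
set Z := y |: (X :\ x).
have ZB : Z \subset B.
  apply/subsetP => z; rewrite !inE => /orP [/eqP -> //|/andP [_ zX]].
  exact: subsetP (OPT_sub BF) _ zX.
have Z_indep : indep F mu Z.
  apply/forallP => A; apply/implyP => AF; rewrite /Z.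
  have := card_swap A xX yX; have := indep_card (OPT_indep BF) AF.
  rewrite -/X; case yA: (y \in A); case xA: (x \in A) => //=; try lia.
  by have := slack A AF yA (negbT xA); rewrite /tight -ltnNge; lia.
have yXx : y \notin X :\ x by rewrite !inE negb_and yX orbT.
have := OPT_max BF ZB Z_indep.
rewrite /Z big_setU1 //= [leRHS](big_setD1 x) //= lerD2r => le_yx.
rewrite lt_neqAle le_yx andbT; apply/eqP => /w_inj e.
by rewrite e xX in yX.
Qed.

Lemma tight_trace (X Y A : {set U}) (y : U) : A \in F -> X :&: A \subset OPT A ->
  Y :&: A \subset OPT A -> tight X A -> y \in Y -> y \in A -> y \in X.
Proof.
move=> AF XA YA Xtight yY yA.
have e : X :&: A = OPT A by apply/eqP; rewrite eqEcard XA OPT_card.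
have : y \in OPT A by apply: (subsetP YA); rewrite inE yY yA.
by rewrite -e inE => /andP [].
Qed.

Definition tight_around (A : {set U}) (i : U) (E : {set U}) : bool :=
  [&& E \in F, i \in E & tight (OPT A) E].

Lemma heavier_in_min_tight (A T : {set U}) (i y : U) :
  A \in F -> i \in A -> i \notin OPT A ->
  minset (tight_around A i) T -> y \in OPT A -> y \in T -> w i < w y.
Proof.
move=> AF iA iY minT yY yT; have /and3P [TF iT _] := minsetp minT.
apply: (OPT_exchange AF yY iA iY) => E EF iE yE.
apply/negP => Etight; case: (laminar_nested EF TF iE iT) => [ET|TE].
  have E_around : tight_around A i E by rewrite /tight_around EF iE.
  by move: yE; rewrite (minsetinf minT E_around ET) yT.
by move: yE; rewrite (subsetP TE _ yT).
Qed.

(* Proof by strong induction on |A|; a counterexample i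
   yields, through a minimal tight set T around i in OPT(A), an element y
   which two exchange arguments show to be both heavier and lighter than i. *)
Lemma OPT_restrict (A B : {set U}) : A \in F -> B \in F -> A \subset B ->
  OPT B :&: A \subset OPT A.
Proof.
move: {2}#|A| (erefl #|A|) => n; elim/ltn_ind: n A B => n IH A B eA AF BF AB.
apply/subsetP => i; rewrite inE => /andP [iX iA]; apply/negPn/negP => iY.
set X := OPT B in iX *; set Y := OPT A in iY *.
have A_around : tight_around A i A.
  by rewrite /tight_around AF iA /tight (setIidPl (OPT_sub AF)) (OPT_card AF) leqnn.
have [T minT TA] := minset_exists A_around.
have /and3P [TF iT Ttight] := minsetp minT.
have [y yYT yX] : exists2 y, y \in Y :&: T & y \notin X.
  apply/subsetPn/negP => YTX.
  have : Y :&: T \subset (X :&: T) :\ i.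
    apply/subsetP => z zYT; move: (zYT); rewrite inE => /andP [zY zT].
    rewrite !inE (subsetP YTX _ zYT) zT !andbT.
    by apply/eqP => ezi; rewrite -ezi zY in iY.
  move/subset_leq_card => le_card.
  have lt_YX : (#|Y :&: T| < #|X :&: T|)%N.
    by rewrite (cardsD1 i (X :&: T)) inE iX iT add1n ltnS.
  by have := leq_ltn_trans Ttight lt_YX; rewrite ltnNge (indep_card (OPT_indep BF) TF).
have /andP [yY yT] : (y \in Y) && (y \in T) by rewrite -in_setI.
have yA : y \in A := subsetP TA _ yT.
have lt_iy := heavier_in_min_tight AF iA iY minT yY yT.
suff lt_yi : w y < w i by have := lt_trans lt_iy lt_yi; rewrite ltxx.
apply: (OPT_exchange BF iX (subsetP AB _ yA) yX) => E EF yE iE.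
apply/negP => Etight; case: (laminar_nested EF TF yE yT) => [ET|TE].
  have EA : E \subset A := subset_trans ET TA.
  have ltE : (#|E| < n)%N.
    by rewrite -eA; apply/proper_card/properP; split => //; exists i.
  have XE := IH _ ltE E B erefl EF BF (subset_trans EA AB).
  have YE := IH _ ltE E A erefl EF AF EA.
  by move: yX; rewrite (tight_trace EF XE YE Etight yY yE).
by move: iE; rewrite (subsetP TE _ iT).
Qed.

Lemma OPT_heavier (A B : {set U}) (i j : U) : A \in F -> B \in F -> A \subset B ->
  i \in OPT B -> i \in A -> j \in OPT A -> w i < w j -> j \in OPT B.
Proof.
move=> AF BF AB iX iA jY lt_ij; apply/negPn/negP => jX.
have jA : j \in A := subsetP (OPT_sub AF) _ jY.
suff lt_ji : w j < w i by have := lt_trans lt_ij lt_ji; rewrite ltxx.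
apply: (OPT_exchange BF iX (subsetP AB _ jA) jX) => E EF jE iE.
apply/negP => Etight; case: (laminar_nested EF AF jE jA) => [EA|AE].
  have XE := OPT_restrict EF BF (subset_trans EA AB).
  have YE := OPT_restrict EF AF EA.
  by move: jX; rewrite (tight_trace EF XE YE Etight jY jE).
by move: iE; rewrite (subsetP AE _ iA).
Qed.


Hypothesis setT_in_F : setT \in F.

Definition around (i : U) (X : {set U}) : bool := (X \in F) && (i \in X).

Lemma Mmin_minset (i : U) : minset (around i) (Mmin F i).
Proof.
rewrite /Mmin; case: pickP => [A //|none].
have setT_around : around i setT by rewrite /around setT_in_F inE.
have [A minA _] := minset_exists setT_around.
by have := none A; rewrite minA.
Qed.

Lemma Mmin_in_F (i : U) : Mmin F i \in F.
Proof. by have /minsetp /andP [] := Mmin_minset i. Qed.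

Lemma Mmin_mem (i : U) : i \in Mmin F i.
Proof. by have /minsetp /andP [] := Mmin_minset i. Qed.

Lemma Mmin_sub (i : U) (A : {set U}) : A \in F -> i \in A -> Mmin F i \subset A.
Proof.
move=> AF iA; case: (laminar_nested (Mmin_in_F i) AF (Mmin_mem i) iA) => // AM.
have A_around : around i A by rewrite /around AF iA.
by rewrite (minsetinf (Mmin_minset i) A_around AM).
Qed.

Definition below (B E : {set U}) : bool := (E \in F) && (E \proper B).
Definition children (B : {set U}) : {set {set U}} := [set C | maxset (below B) C].

Lemma child_in_F (B C : {set U}) : C \in children B -> C \in F.
Proof. by rewrite inE => /maxsetp /andP []. Qed.

Lemma child_proper (B C : {set U}) : C \in children B -> C \proper B.
Proof. by rewrite inE => /maxsetp /andP []. Qed.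

Lemma child_above (B D : {set U}) : D \in F -> D \proper B ->
  exists2 C, C \in children B & D \subset C.
Proof.
move=> DF DB; have D_below : below B D by rewrite /below DF DB.
by have [C maxC DC] := maxset_exists D_below; exists C; rewrite ?inE.
Qed.

Lemma child_unique (B C1 C2 : {set U}) (i : U) :
  C1 \in children B -> C2 \in children B ->
  i \in C1 -> i \in C2 -> C1 = C2.
Proof.
move=> C1ch C2ch iC1 iC2.
have C1_below : below B C1 by rewrite /below (child_in_F C1ch) (child_proper C1ch).
have C2_below : below B C2 by rewrite /below (child_in_F C2ch) (child_proper C2ch).
case: (laminar_nested (child_in_F C1ch) (child_in_F C2ch) iC1 iC2) => sub.
  by move: C1ch; rewrite inE => /maxsetsup /(_ C2_below sub) ->.
by move: C2ch; rewrite inE => /maxsetsup /(_ C1_below sub) ->.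
Qed.

Lemma chain_below_child (i : U) (B B' : {set U}) :
  B' \in Chain F (Mmin F i) B -> B' != B ->
  exists2 C, C \in children B & (i \in C) && (B' \subset C).
Proof.
rewrite inE => /and3P [B'F MB' B'B] neB.
have [C Cch B'C] : exists2 C, C \in children B & B' \subset C.
  by apply: child_above; rewrite ?properEneq ?neB.
by exists C; rewrite // B'C (subsetP B'C _ (subsetP MB' _ (Mmin_mem i))).
Qed.

Lemma chain_child (i : U) (B C : {set U}) : C \in children B -> i \in C ->
  [set B' in Chain F (Mmin F i) B | B' != B] = Chain F (Mmin F i) C.
Proof.
move=> Cch iC; have CB := child_proper Cch.
apply/setP => B'; rewrite inE; apply/idP/idP.
  move=> /andP [B'chain neB].
  have [C' C'ch /andP [iC' B'C']] := chain_below_child B'chain neB.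
  move: B'chain; rewrite -(child_unique C'ch Cch iC' iC) !inE.
  by case/and3P => -> -> _; rewrite B'C'.
rewrite !inE => /and3P [B'F MB' B'C].
rewrite B'F MB' (subset_trans B'C (proper_sub CB)) /=.
by apply: contraTneq CB => eB'; rewrite -eB' properE B'C andbF.
Qed.

Lemma chain_decomposition (i : U) (B : {set U}) (H : {set U} -> R) :
  B \in F -> i \in B ->
  \sum_(B' in Chain F (Mmin F i) B) H B' =
  H B + \sum_(C in children B | i \in C) \sum_(B' in Chain F (Mmin F i) C) H B'.
Proof.
move=> BF iB; rewrite (bigD1 B) /=; last by rewrite inE BF subxx Mmin_sub.
congr (_ + _); case: (pickP (fun C => (C \in children B) && (i \in C))).
  move=> C0 /andP [C0ch iC0]; rewrite [RHS](bigD1 C0) ?C0ch //=.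
  rewrite [X in _ = _ + X]big1 ?addr0; last first.
    move=> C /andP [/andP [Cch iC] neC].
    by rewrite (child_unique Cch C0ch iC iC0) eqxx in neC.
  by rewrite -(chain_child C0ch iC0); apply: eq_bigl => B'; rewrite !inE.
move=> none; rewrite [RHS]big_pred0 // big_pred0 // => B'.
apply/negP => /andP [B'chain neB].
have [C Cch /andP [iC _]] := chain_below_child B'chain neB.
by have := none C; rewrite Cch iC.
Qed.

(* rk X i: the number of elements of X heavier than i; OPT^m_large(B)
   consists of the elements of OPT(B) with rk < m. *)
Definition rk (X : {set U}) (i : U) : nat := #|[set j in X | w i < w j]|.

Lemma rk_lt (X : {set U}) (i j : U) :
  i \in X -> j \in X -> w i < w j -> (rk X j < rk X i)%N.
Proof.
move=> iX jX lt_ij; apply/proper_card/properP; split.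
  by apply/subsetP => z; rewrite !inE => /andP [-> /(lt_trans lt_ij) ->].
by exists j; rewrite !inE ?jX ?lt_ij ?ltxx.
Qed.

Lemma rk_inj (X : {set U}) : {in X &, injective (rk X)}.
Proof.
move=> i j iX jX e; case: (ltgtP (w i) (w j)) => [lt_ij|lt_ji|/w_inj //].
  by have := rk_lt iX jX lt_ij; rewrite e ltnn.
by have := rk_lt jX iX lt_ji; rewrite e ltnn.
Qed.

(* The lighter and the heavier elements of X partition X minus i. *)
Lemma brank_add_rk (X : {set U}) (i : U) :
  i \in X -> (brank w X i + rk X i).+1 = #|X|.
Proof.
move=> iX.
set lo := [set j in X | w j < w i]; set hi := [set j in X | w i < w j].
have e_split : X :\ i = lo :|: hi.
  apply/setP => j; rewrite !inE; case jX: (j \in X); rewrite ?andbF //= andbT.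
  case: (ltgtP (w j) (w i)) => [lt_ji|lt_ij|/w_inj ->]; last by rewrite eqxx.
    by apply/eqP => eji; rewrite eji ltxx in lt_ji.
  by apply/eqP => eji; rewrite eji ltxx in lt_ij.
have e_disj : lo :&: hi = set0.
  apply/setP => j; rewrite !inE; apply/negP => /andP [/andP [_ lt_ji] /andP [_ lt_ij]].
  by have := lt_trans lt_ji lt_ij; rewrite ltxx.
have := cardsUI lo hi; rewrite e_disj cards0 -e_split addn0.
by rewrite [#|X|](cardsD1 i) iX /brank /rk -/lo -/hi => ->.
Qed.

(* OPT^m_large has at most m elements, their ranks being distinct and < m. *)
Lemma card_OPT_large (X : {set U}) (m : nat) : (#|OPT_large w X m| <= m)%N.
Proof.
have := @sum_distinct_ranks R _ (OPT_large w X m) (rk X) m (fun _ => 1).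
rewrite !sumr_const card_ord ler_nat; apply=> [i j|i|_]; rewrite ?inE //.
- by move=> /andP [iX _] /andP [jX _]; apply: rk_inj.
- by case/andP.
Qed.

Variable c : R.
Hypotheses (c_gt0 : 0 < c) (c_lt1 : c < 1).
Hypothesis mu_gt0 : forall A, A \in F -> (0 < mu A)%N.
Hypothesis mu_mono : forall A B, A \in F -> B \in F -> A \proper B -> (mu A < mu B)%N.

Definition chain_weight (i : U) (C : {set U}) : R :=
  \sum_(B' in Chain F (Mmin F i) C) c ^+ (1 + brank w (OPT B') i).

Lemma chain_weight_ge0 (i : U) (C : {set U}) : 0 <= chain_weight i C.
Proof. by apply: sumr_ge0 => B' _; apply/exprn_ge0/ltW. Qed.

Lemma gfunE (m : nat) (B : {set U}) :
  gfun F OPT w c m B = \sum_(i in OPT_large w (OPT B) m) chain_weight i B.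
Proof. by []. Qed.

Lemma gfun_split (m : nat) (B : {set U}) : B \in F ->
  gfun F OPT w c m B =
    \sum_(i in OPT_large w (OPT B) m) c ^+ (1 + brank w (OPT B) i)
  + \sum_(C in children B) \sum_(i in OPT_large w (OPT B) m :&: C) chain_weight i C.
Proof.
move=> BF; rewrite gfunE; set L := OPT_large w (OPT B) m.
under eq_bigr => i iL.
  have iB : i \in B by move: iL; rewrite inE => /andP [/(subsetP (OPT_sub BF))].
  rewrite /chain_weight.
  rewrite (chain_decomposition (fun B' => c ^+ (1 + brank w (OPT B') i)) BF iB).
  over.
rewrite big_split /=; congr (_ + _).
rewrite (exchange_big_dep (fun C => C \in children B)) /=; last by move=> i C _ /andP [].
by apply: eq_bigr => C Cch; apply: eq_bigl => i; rewrite in_setI Cch.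
Qed.

(* The terms of B itself: the elements of OPT^m_large(B) have distinct ranks
   rk < m in OPT(B), and brank = mu(B) - 1 - rk there. *)
Lemma top_terms_bound (m : nat) (B : {set U}) : B \in F -> (m <= mu B)%N ->
  \sum_(i in OPT_large w (OPT B) m) c ^+ (1 + brank w (OPT B) i)
    <= c ^+ (mu B - m) * csum c m.
Proof.
move=> BF mB; rewrite -sum_pow_tail //.
under eq_bigr => i iL.
  have iX : i \in OPT B by move: iL; rewrite inE => /andP [].
  have e : (1 + brank w (OPT B) i = mu B - rk (OPT B) i)%N.
    by rewrite -(OPT_card BF) -(brank_add_rk iX); lia.
  rewrite e; over.
apply: (sum_distinct_ranks (rho := rk (OPT B)) (phi := fun t => c ^+ (mu B - t))).
- by move=> i j; rewrite !inE => /andP [iX _] /andP [jX _]; apply: rk_inj.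
- by move=> i; rewrite inE => /andP [].
- by move=> t; apply/exprn_ge0/ltW.
Qed.

Lemma OPT_large_restrict (m : nat) (B C : {set U}) :
  B \in F -> C \in F -> C \subset B ->
  OPT_large w (OPT B) m :&: C \subset
    OPT_large w (OPT C) #|OPT_large w (OPT B) m :&: C|.
Proof.
move=> BF CF CB; set L := OPT_large w (OPT B) m.
apply/subsetP => i; rewrite in_setI => /andP [iL iC].
have /andP [iX rk_i] : (i \in OPT B) && (rk (OPT B) i < m)%N by move: iL; rewrite inE.
have iY : i \in OPT C by apply: (subsetP (OPT_restrict CF BF CB)); rewrite inE iX iC.
rewrite inE iY (cardsD1 i (L :&: C)) in_setI iL iC add1n ltnS subset_leq_card //.
apply/subsetP => j; rewrite inE => /andP [jY lt_ij].
have jX : j \in OPT B := OPT_heavier CF BF CB iX iC jY lt_ij.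
have jL : j \in L by rewrite inE jX (ltn_trans (rk_lt iX jX lt_ij) rk_i).
rewrite in_setD1 in_setI jL (subsetP (OPT_sub CF) _ jY) !andbT.
by apply: contraTneq lt_ij => ->; rewrite ltxx.
Qed.

(* The children of B are disjoint, so they share out the elements of S. *)
Lemma children_card_sum (B S : {set U}) :
  (\sum_(C in children B) #|S :&: C| <= #|S|)%N.
Proof.
have -> : (\sum_(C in children B) #|S :&: C|
           = \sum_(i in S) \sum_(C in children B | i \in C) 1)%N.
  rewrite (exchange_big_dep (fun C => C \in children B)) /=; last first.
    by move=> i C _ /andP [].
  apply: eq_bigr => C Cch; rewrite -sum1_card.
  by apply: eq_bigl => i; rewrite in_setI Cch.
rewrite -sum1_card; apply: leq_sum => i _.
case: (pickP (fun C => (C \in children B) && (i \in C))) => [C0 /andP [C0ch iC0]|none].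
  rewrite (bigD1 C0) ?C0ch //= big1 // => C /andP [/andP [Cch iC] neC].
  by rewrite (child_unique Cch C0ch iC iC0) eqxx in neC.
by rewrite big_pred0.
Qed.

Lemma gfun_le_fbound (n : nat) : forall (B : {set U}) (m : nat),
  #|B| = n -> B \in F -> (m <= mu B)%N -> gfun F OPT w c m B <= fbound c m (mu B).
Proof.
elim/ltn_ind: n => n IH B m eB BF mB; set L := OPT_large w (OPT B) m.
have [k ek] : exists k, mu B = k.+1 by case: (mu B) (mu_gt0 BF) => // k _; exists k.
have child_bound C : C \in children B ->
    [/\ \sum_(i in L :&: C) chain_weight i C <= fbound c #|L :&: C| (mu C),
        (#|L :&: C| <= mu C)%N & (mu C <= k)%N].
  move=> Cch; have CF := child_in_F Cch; have CB := child_proper Cch.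
  have sub := OPT_large_restrict m BF CF (proper_sub CB).
  have aC : (#|L :&: C| <= mu C)%N.
    rewrite -(OPT_card CF) subset_leq_card // (subset_trans sub) //.
    by apply/subsetP => i; rewrite inE => /andP [].
  split=> //; last by rewrite -ltnS -ek mu_mono.
  have ltC : (#|C| < n)%N by rewrite -eB proper_card.
  apply: le_trans (IH _ ltC C _ erefl CF aC); rewrite gfunE.
  by apply: sumr_le_subset => [i /(subsetP sub)|i _] //; exact: chain_weight_ge0.
have children_total : (\sum_(C in children B) #|L :&: C| <= m)%N.
  exact: leq_trans (children_card_sum B L) (card_OPT_large _ _).
have mk : (m <= k.+1)%N by rewrite -ek.
rewrite gfun_split // ek -(fbound_split c_gt0 c_lt1 mk) -ek.
apply: lerD; first exact: top_terms_bound.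
apply: (@le_trans _ _ (\sum_(C in children B) fbound c #|L :&: C| (mu C))).
  by apply: ler_sum => C /child_bound [].
apply: le_trans _ (budget_mono c_gt0 c_lt1 children_total mk).
apply: (budget_sum c_gt0 c_lt1) => [C Cch|]; first by case: (child_bound C Cch).
exact: leq_trans children_total mk.
Qed.

End LaminarMatroid.

Close Scope ring_scope.

Theorem mainTheorem4 (U : finType) (R : realFieldType)
  (w : U -> R) (F : {set {set U}}) (mu : {set U} -> nat)
  (OPT : {set U} -> {set U}) (c : R) :
  (forall i, (0 <= w i)%R) ->
  injective w ->
  laminar F ->
  setT \in F ->
  (forall A, A \in F -> 0 < mu A) ->
  (forall A B, A \in F -> B \in F -> A \proper B -> mu A < mu B) ->
  (forall B, B \in F -> is_OPT F mu w B (OPT B)) ->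
  (0 < c)%R -> (c < 1 / 2)%R ->
  forall (B : {set U}) (m : nat), B \in F -> m <= mu B ->
  (gfun F OPT w c m B <=
     \sum_(1 <= j < m) 2 * csum c j + csum c m
     + csum c m * csum c (mu B - m))%R.
Proof.
move=> _ w_inj F_laminar setT_in_F mu_gt0 mu_mono OPT_spec c_gt0 c_lt_half.
move=> B m BF mB; have c_lt1 : (c < 1)%R by move: c_lt_half; lra.
exact: (gfun_le_fbound w_inj F_laminar OPT_spec setT_in_F c_gt0 c_lt1 mu_gt0 mu_mono
          erefl BF mB).
Qed.
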